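(* For every $t>0$, the operator $B(t)=W(1)\circ DH(v(\cdot;t))\circ W(t)$ acting on $X_1$ has the same eigenvalues as $\tilde A(t)$ acting on $X_t$: $\lambda$ is an eigenvalue of $B(t)$ (i.e. $B(t)[u]=\lambda u$ for some nonzero $u\in X_1$) if and only if $\lambda$ is an eigenvalue of $\tilde A(t)$ (i.e. $\tilde A(t)[w]=\lambda w$ for some nonzero $w\in X_t$).
   Context: Fix $n\ge2$, $d>0$. $Q(t)=\frac{1-t^{n-1}}{1-t^n}$ ($t\ne1$), $Q(1)=\frac{n-1}n$; for $0\le x\le1$, $R(x;t)=\frac{1}{|1-t|}\sqrt{\left(\frac{(1-(1-t)x)^{n-1}}{1-Q(t)+Q(t)(1-(1-t)x)^n}\right)^2-1}$ ($t\ne1$), $R(x;1)=\sqrt{(n-1)(1-x)x}$; $\zeta(x;t)=\int_x^1R(\tilde x;t)^{-1}d\tilde x$, $\zeta(1;t)=0$, $P(t)=\zeta(0;t)$, $\zeta^{-1}(\cdot;t)$ the inverse of $x\mapsto\zeta(x;t)$; $v(z;t)=\frac{d}{P(t)}\left(1-(1-t)\zeta^{-1}\left(\frac{P(t)z}{d};t\right)\right)$, $z\in[0,d]$. For positive $C^2$ $f$, $H(f)=\frac{-f_{zz}}{(1+f_z^2)^{3/2}}+\frac{n-1}{f\sqrt{1+f_z^2}}$ and $DH(f)[w]=\frac{d}{ds}\big|_{s=0}H(f+sw)$. Let $X_t=\{w\in C^2[0,d]:\int_0^dwv(\cdot;t)^{n-1}dz=0,\ w_z(0)=w_z(d)=0\}$,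 $W(t)[u]=u-\frac{\int_0^du\,v(z;t)^{n-1}dz}{\int_0^dv(z;t)^{n-1}dz}$ (the projection onto $X_t$), and $\tilde A(t)=W(t)\circ DH(v(\cdot;t))$ on $X_t$. *)

From Stdlib Require Import Reals Lra ClassicalEpsilon.
Open Scope R_scope.

Definition is_deriv_within (a b : R) (f : R -> R) (x l : R) : Prop :=
  forall eps, 0 < eps -> exists delta, 0 < delta /\
    forall y, a <= y <= b -> y <> x -> Rabs (y - x) < delta ->
      Rabs ((f y - f x) / (y - x) - l) < eps.

(* the (chosen) derivative within [a,b]; unique when a < b *)
Definition deriv_within (a b : R) (f : R -> R) : R -> R := fun x =>
  epsilon (inhabits 0) (fun l => is_deriv_within a b f x l).

Definition continuous_within (a b : R) (f : R -> R) : Prop :=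
  forall x, a <= x <= b -> forall eps, 0 < eps -> exists delta, 0 < delta /\
    forall y, a <= y <= b -> Rabs (y - x) < delta -> Rabs (f y - f x) < eps.

Definition C2_on (a b : R) (f : R -> R) : Prop :=
  (forall x, a <= x <= b -> exists l, is_deriv_within a b f x l) /\
  (forall x, a <= x <= b -> exists l, is_deriv_within a b (deriv_within a b f) x l) /\
  continuous_within a b (deriv_within a b (deriv_within a b f)).

Definition integral (a b : R) (f : R -> R) : R :=
  epsilon (inhabits 0)
    (fun I => exists pr : Riemann_integrable f a b, RiemannInt pr = I).

Definition improper_integral (a b : R) (f : R -> R) : R :=
  epsilon (inhabits 0) (fun L =>
    forall eps, 0 < eps -> exists delta, 0 < delta /\
      forall a' b', a < a' < a + delta -> b - delta < b' < b -> a' <= b' ->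
        Rabs (integral a' b' f - L) < eps).

Definition Qf (n : nat) (t : R) : R :=
  if Req_EM_T t 1 then (INR n - 1) / INR n
  else (1 - t ^ (n - 1)) / (1 - t ^ n).

Definition Rfun (n : nat) (x t : R) : R :=
  if Req_EM_T t 1 then sqrt ((INR n - 1) * (1 - x) * x)
  else / Rabs (1 - t) *
       sqrt (((1 - (1 - t) * x) ^ (n - 1)
               / (1 - Qf n t + Qf n t * (1 - (1 - t) * x) ^ n)) ^ 2 - 1).

Definition zeta (n : nat) (x t : R) : R :=
  if Req_EM_T x 1 then 0
  else improper_integral x 1 (fun y => / Rfun n y t).

Definition Pf (n : nat) (t : R) : R := zeta n 0 t.

Definition zeta_inv (n : nat) (y t : R) : R :=
  epsilon (inhabits 0) (fun x => 0 <= x <= 1 /\ zeta n x t = y).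

Definition vf (n : nat) (d z t : R) : R :=
  d / Pf n t * (1 - (1 - t) * zeta_inv n (Pf n t * z / d) t).

(* mean curvature operator H(f), derivatives taken on [0,d] *)
Definition Hop (n : nat) (d : R) (f : R -> R) : R -> R := fun z =>
  let f1 := deriv_within 0 d f z in
  let f2 := deriv_within 0 d (deriv_within 0 d f) z in
  - f2 / Rpower (1 + f1 ^ 2) (3 / 2) + (INR n - 1) / (f z * sqrt (1 + f1 ^ 2)).

Definition DH (n : nat) (d : R) (f w : R -> R) : R -> R := fun z =>
  epsilon (inhabits 0) (fun l =>
    derivable_pt_lim (fun s => Hop n d (fun y => f y + s * w y) z) 0 l).

Definition Wproj (n : nat) (d t : R) (u : R -> R) : R -> R := fun z =>
  u z - integral 0 d (fun y => u y * vf n d y t ^ (n - 1))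
        / integral 0 d (fun y => vf n d y t ^ (n - 1)).

Definition Xt (n : nat) (d t : R) (w : R -> R) : Prop :=
  C2_on 0 d w /\
  integral 0 d (fun y => w y * vf n d y t ^ (n - 1)) = 0 /\
  deriv_within 0 d w 0 = 0 /\ deriv_within 0 d w d = 0.

Definition Atilde (n : nat) (d t : R) (w : R -> R) : R -> R :=
  Wproj n d t (DH n d (fun z => vf n d z t) w).

Definition Bop (n : nat) (d t : R) (u : R -> R) : R -> R :=
  Wproj n d 1 (DH n d (fun z => vf n d z t) (Wproj n d t u)).

Definition is_eigenvalue_on (n : nat) (d s : R)
    (T : (R -> R) -> (R -> R)) (lam : R) : Prop :=
  exists u, Xt n d s u /\ (exists z, 0 <= z <= d /\ u z <> 0) /\
    forall z, 0 <= z <= d -> T u z = lam * u z.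

From Stdlib Require Import Reals Lra Lia ClassicalEpsilon FunctionalExtensionality
  PropExtensionality Classical.
From Coquelicot Require Import Coquelicot.
Open Scope R_scope.

(* W(s) u = u - <u>_s subtracts the mean of u for the weight
   v(.;s)^(n-1); as projections differing by constants, W(s) W(r) = W(s),
   W(s) is the identity on X_s and absorbs additive constants.  Hence W(s) and
   W(r) exchange the eigenvectors of W(r) L W(s) on X_r and of W(s) L on X_s
   for ANY operator L (eigenvalue_transfer_right/left; lemma5p1 takes r = 1,
   s = t, L = DH(v(.;t))), provided each weight is continuous on [0,d] with
   positive integral.  Most of the file proves this analytic fact:
   R(x;t) >= c sqrt(x(1-x)) on (0,1) (via geometric sums), so 1/R(.;t) is
   dominated by 1/sqrt x + 1/sqrt(1-x); hence zeta(.;t) is finite, strictly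
   decreasing and 1/2-Hoelder, its inverse is continuous, and
   v(.;t) = d/P (1 - (1-t) zeta^{-1}(P z/d)) is continuous and positive. *)

(* clamp d z is the projection of z onto [0,d]; composing with it turns a
   function continuous within [0,d] into a function continuous on all of R,
   which is the form Coquelicot's integration lemmas expect. *)
Definition clamp (d z : R) : R := Rmax 0 (Rmin d z).

Lemma clamp_in d z : 0 <= d -> 0 <= clamp d z <= d.
Proof. intros; unfold clamp, Rmax, Rmin; repeat destruct Rle_dec; lra. Qed.

Lemma clamp_id d z : 0 <= z <= d -> clamp d z = z.
Proof. intros; unfold clamp, Rmax, Rmin; repeat destruct Rle_dec; lra. Qed.

Lemma clamp_lip d x y : 0 <= d -> Rabs (clamp d y - clamp d x) <= Rabs (y - x).
Proof.
  intros; unfold clamp, Rmax, Rmin; repeat destruct Rle_dec;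
  unfold Rabs; repeat destruct Rcase_abs; lra.
Qed.

Lemma continuous_of_eps_delta (f : R -> R) x :
  (forall eps, 0 < eps -> exists delta, 0 < delta /\
     forall y, Rabs (y - x) < delta -> Rabs (f y - f x) < eps) ->
  continuous f x.
Proof.
  intros H. apply continuity_pt_filterlim.
  unfold continuity_pt, continue_in, limit1_in, limit_in; simpl; unfold R_dist.
  intros eps Heps. destruct (H eps Heps) as [dl [Hd Hf]].
  exists dl; split; auto. intros y [_ Hy]. auto.
Qed.

Definition clamped_continuous (d : R) (g : R -> R) : Prop :=
  forall x, continuous (fun z => g (clamp d z)) x.

Lemma clamped_continuous_of_within d g : 0 <= d -> continuous_within 0 d g ->
  clamped_continuous d g.
Proof.
  intros Hd Hg x. apply continuous_of_eps_delta. intros eps He.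
  destruct (Hg (clamp d x) (clamp_in d x Hd) eps He) as [dl [Hdl Hf]].
  exists dl; split; auto. intros y Hy. apply Hf; [apply clamp_in; auto|].
  eapply Rle_lt_trans; [apply clamp_lip; auto| auto].
Qed.

Lemma clamped_continuous_mult d f g :
  clamped_continuous d f -> clamped_continuous d g ->
  clamped_continuous d (fun y => f y * g y).
Proof. intros Hf Hg x; apply (continuous_mult (fun z => f (clamp d z))); auto. Qed.

Lemma continuous_within_of_deriv a b f x l : a <= x <= b -> is_deriv_within a b f x l ->
  forall eps, 0 < eps -> exists delta, 0 < delta /\
    forall y, a <= y <= b -> Rabs (y - x) < delta -> Rabs (f y - f x) < eps.
Proof.
  intros Hx H eps He.
  destruct (H 1 Rlt_0_1) as [dl [Hdl Hf]].
  assert (Hl : 0 < Rabs l + 1) by (pose proof (Rabs_pos l); lra).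
  exists (Rmin dl (eps / (Rabs l + 1))); split.
  { apply Rmin_glb_lt; auto. apply Rdiv_lt_0_compat; lra. }
  intros y Hy Hyx.
  destruct (Req_dec y x) as [->|Hne]; [rewrite Rminus_diag, Rabs_R0; auto|].
  pose proof (Rmin_l dl (eps / (Rabs l + 1))). pose proof (Rmin_r dl (eps / (Rabs l + 1))).
  specialize (Hf y Hy Hne ltac:(lra)).
  assert (Hq : Rabs ((f y - f x) / (y - x)) <= Rabs l + 1).
  { pose proof (Rabs_triang_inv ((f y - f x) / (y - x)) l). lra. }
  replace (f y - f x) with ((f y - f x) / (y - x) * (y - x)) by (field; lra).
  rewrite Rabs_mult.
  apply Rle_lt_trans with ((Rabs l + 1) * Rabs (y - x)).
  - apply Rmult_le_compat_r; auto. apply Rabs_pos.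
  - replace eps with ((Rabs l + 1) * (eps / (Rabs l + 1))) by (field; lra).
    apply Rmult_lt_compat_l; lra.
Qed.

Lemma C2_clamped_continuous d u : 0 <= d -> C2_on 0 d u -> clamped_continuous d u.
Proof.
  intros Hd [H1 _]. apply clamped_continuous_of_within; auto.
  intros x Hx. destruct (H1 x Hx) as [l Hl]. eapply continuous_within_of_deriv; eauto.
Qed.

Lemma is_deriv_within_shift a b u k x l :
  is_deriv_within a b (fun z => u z - k) x l <-> is_deriv_within a b u x l.
Proof.
  unfold is_deriv_within.
  assert (E : forall y, u y - k - (u x - k) = u y - u x) by (intros; ring).
  split; intros H eps He; destruct (H eps He) as [dl [Hdl Hf]]; exists dl; split; auto;
    intros y H1 H2 H3; specialize (Hf y H1 H2 H3); [rewrite E in Hf | rewrite E]; auto.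
Qed.

Lemma deriv_within_shift a b u k :
  deriv_within a b (fun z => u z - k) = deriv_within a b u.
Proof.
  apply functional_extensionality; intro x. unfold deriv_within. f_equal.
  apply functional_extensionality; intro l. apply propositional_extensionality.
  apply is_deriv_within_shift.
Qed.

Lemma C2_shift d u k : C2_on 0 d u -> C2_on 0 d (fun z => u z - k).
Proof.
  intros [H1 [H2 H3]]. unfold C2_on. rewrite deriv_within_shift. split; auto.
  intros x Hx. destruct (H1 x Hx) as [l Hl]. exists l. apply is_deriv_within_shift; auto.
Qed.

Lemma integral_RInt f a b : ex_RInt f a b -> integral a b f = RInt f a b.
Proof.
  intros H. pose proof (ex_RInt_Reals_0 _ _ _ H) as pr.
  assert (Hex : exists I, exists pr, @RiemannInt f a b pr = I)
    by (exists (RiemannInt pr); exists pr; reflexivity).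
  destruct (epsilon_spec (inhabits 0) _ Hex) as [pr' Hpr'].
  unfold integral. rewrite <- Hpr'. symmetry. apply RInt_Reals.
Qed.

Lemma ex_RInt_clamped d g : 0 < d -> clamped_continuous d g -> ex_RInt g 0 d.
Proof.
  intros Hd Hg. apply ex_RInt_ext with (fun z => g (clamp d z)).
  - intros x Hx. rewrite Rmin_left, Rmax_right in Hx by lra. rewrite clamp_id; auto; lra.
  - apply (@ex_RInt_continuous R_CompleteNormedModule). intros; apply Hg.
Qed.

(* Linearity of the weighted integral, for F equal to a * g + b on [0,d]
   (F itself need not be regular off [0,d], nor even integrable a priori). *)
Lemma integral_affine d (h g F : R -> R) a b : 0 < d ->
  clamped_continuous d h -> clamped_continuous d g ->
  (forall z, 0 <= z <= d -> F z = a * g z + b) ->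
  integral 0 d (fun y => F y * h y) =
  a * integral 0 d (fun y => g y * h y) + b * integral 0 d h.
Proof.
  intros Hd Hh Hg HF.
  assert (E1 : ex_RInt h 0 d) by (apply ex_RInt_clamped; auto).
  assert (E2 : ex_RInt (fun y => g y * h y) 0 d)
    by (apply ex_RInt_clamped, clamped_continuous_mult; auto).
  assert (Eq : forall x, Rmin 0 d < x < Rmax 0 d -> a * (g x * h x) + b * h x = F x * h x).
  { intros x Hx. rewrite Rmin_left, Rmax_right in Hx by lra. rewrite HF by lra. ring. }
  assert (E3 : ex_RInt (fun y => a * (g y * h y) + b * h y) 0 d).
  { apply (ex_RInt_plus (V:=R_NormedModule) (fun y => a * (g y * h y)) (fun y => b * h y));
      apply (ex_RInt_scal (V:=R_NormedModule)); auto. }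
  assert (E4 : ex_RInt (fun y => F y * h y) 0 d) by (eapply ex_RInt_ext; [exact Eq| exact E3]).
  rewrite !integral_RInt by auto.
  change (RInt (fun y => F y * h y) 0 d = a * RInt (fun y => g y * h y) 0 d + b * RInt h 0 d).
  rewrite <- (RInt_ext _ _ _ _ Eq).
  rewrite (RInt_plus (V:=R_CompleteNormedModule) (fun y => a * (g y * h y)) (fun y => b * h y))
    by (apply (ex_RInt_scal (V:=R_NormedModule)); auto).
  rewrite (RInt_scal (V:=R_CompleteNormedModule) (fun y => g y * h y)) by auto.
  rewrite (RInt_scal (V:=R_CompleteNormedModule) h) by auto.
  reflexivity.
Qed.

Lemma sqrt_sub_le x y : 0 <= y <= x -> sqrt x - sqrt y <= sqrt (x - y).
Proof.
  intros [Hy Hxy].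
  pose proof (sqrt_pos y). pose proof (sqrt_pos (x - y)).
  enough (sqrt x <= sqrt y + sqrt (x - y)) by lra.
  rewrite <- (sqrt_square (sqrt y + sqrt (x - y))) by lra.
  apply sqrt_le_1_alt.
  replace ((sqrt y + sqrt (x - y)) * (sqrt y + sqrt (x - y))) with
    (sqrt y * sqrt y + sqrt (x - y) * sqrt (x - y) + 2 * sqrt y * sqrt (x - y)) by ring.
  rewrite !sqrt_sqrt by lra. nra.
Qed.

Lemma sqrt_holder x y : 0 <= x -> 0 <= y -> Rabs (sqrt x - sqrt y) <= sqrt (Rabs (x - y)).
Proof.
  intros Hx Hy. destruct (Rle_dec y x).
  - rewrite (Rabs_right (x - y)) by lra.
    pose proof (sqrt_le_1_alt y x r).
    rewrite Rabs_right by lra. apply sqrt_sub_le; lra.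
  - pose proof (sqrt_le_1_alt x y ltac:(lra)).
    rewrite (Rabs_left1 (x - y)), Rabs_left1 by lra.
    replace (- (sqrt x - sqrt y)) with (sqrt y - sqrt x) by ring.
    replace (- (x - y)) with (y - x) by ring. apply sqrt_sub_le; lra.
Qed.

(* The model singularity Mj x = 1/sqrt x + 1/sqrt (1-x) on (0,1), and its
   primitive Gm; integrands dominated by a multiple of Mj have improper
   integrals on (0,1) that are 1/2-Hoelder in the lower endpoint. *)
Definition Gm (x : R) : R := 2 * sqrt x - 2 * sqrt (1 - x).
Definition Mj (x : R) : R := / sqrt x + / sqrt (1 - x).

Lemma Gm_mono x y : 0 <= x <= y -> y <= 1 -> Gm x <= Gm y.
Proof.
  intros. unfold Gm.
  pose proof (sqrt_le_1_alt x y). pose proof (sqrt_le_1_alt (1 - y) (1 - x)). lra.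
Qed.

Lemma Gm_holder x y : 0 <= x <= 1 -> 0 <= y <= 1 ->
  Rabs (Gm x - Gm y) <= 4 * sqrt (Rabs (x - y)).
Proof.
  intros Hx Hy. unfold Gm.
  pose proof (sqrt_holder x y ltac:(lra) ltac:(lra)).
  pose proof (sqrt_holder (1 - x) (1 - y) ltac:(lra) ltac:(lra)) as H1.
  replace (1 - x - (1 - y)) with (- (x - y)) in H1 by ring. rewrite Rabs_Ropp in H1.
  replace (2 * sqrt x - 2 * sqrt (1 - x) - (2 * sqrt y - 2 * sqrt (1 - y)))
    with (2 * (sqrt x - sqrt y) - 2 * (sqrt (1 - x) - sqrt (1 - y))) by ring.
  eapply Rle_trans; [apply Rabs_triang|].
  rewrite Rabs_Ropp, !Rabs_mult, Rabs_right by lra. lra.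
Qed.

Lemma Gm_reflect x : Gm (1 - x) = - Gm x.
Proof. unfold Gm. replace (1 - (1 - x)) with x by ring. ring. Qed.

Lemma Gm_0 : Gm 0 = - 2.
Proof. unfold Gm. rewrite Rminus_0_r, sqrt_0, sqrt_1. ring. Qed.

Lemma Gm_1 : Gm 1 = 2.
Proof. unfold Gm. rewrite Rminus_diag, sqrt_0, sqrt_1. ring. Qed.

Lemma Gm_derive x : 0 < x < 1 -> is_derive Gm x (Mj x).
Proof.
  intros Hx. unfold Gm, Mj.
  assert (0 < sqrt x) by (apply sqrt_lt_R0; lra).
  assert (0 < sqrt (1 - x)) by (apply sqrt_lt_R0; lra).
  auto_derive; replace (1 + - x) with (1 - x) by ring.
  - repeat split; lra.
  - field. lra.
Qed.

Lemma Mj_continuous x : 0 < x < 1 -> continuous Mj x.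
Proof.
  intros Hx. apply (ex_derive_continuous (K:=R_AbsRing) (V:=R_NormedModule)). unfold Mj.
  assert (0 < sqrt x) by (apply sqrt_lt_R0; lra).
  assert (0 < sqrt (1 - x)) by (apply sqrt_lt_R0; lra).
  auto_derive. replace (1 + - x) with (1 - x) by ring. repeat split; lra.
Qed.

Lemma RInt_Mj a b : 0 < a -> a <= b -> b < 1 -> RInt Mj a b = Gm b - Gm a.
Proof.
  intros. apply is_RInt_unique.
  apply (is_RInt_derive (V:=R_CompleteNormedModule) Gm Mj);
    intros x Hx; rewrite Rmin_left, Rmax_right in Hx by lra.
  - apply Gm_derive; lra.
  - apply Mj_continuous; lra.
Qed.

Definition is_improper_integral (a b : R) (f : R -> R) (L : R) : Prop :=
  forall eps, 0 < eps -> exists delta, 0 < delta /\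
      forall a' b', a < a' < a + delta -> b - delta < b' < b -> a' <= b' ->
        Rabs (integral a' b' f - L) < eps.

Lemma improper_integral_unique a b f L : a < b -> is_improper_integral a b f L ->
  improper_integral a b f = L.
Proof.
  intros Hab HL. change (epsilon (inhabits 0) (is_improper_integral a b f) = L).
  assert (Hex : exists L, is_improper_integral a b f L) by eauto.
  pose proof (epsilon_spec (inhabits 0) _ Hex) as HL'.
  set (L' := epsilon (inhabits 0) (is_improper_integral a b f)) in *.
  apply NNPP; intro Hne.
  assert (He : 0 < Rabs (L' - L) / 2).
  { assert (L' - L <> 0) by lra. pose proof (Rabs_pos_lt _ H). lra. }
  destruct (HL _ He) as [d1 [Hd1 H1]]. destruct (HL' _ He) as [d2 [Hd2 H2]].
  set (m := Rmin (Rmin d1 d2) (b - a)).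
  assert (Hm : 0 < m) by (unfold m; repeat apply Rmin_glb_lt; lra).
  assert (m <= d1 /\ m <= d2 /\ m <= b - a) as (Hm1 & Hm2 & Hm3).
  { unfold m. pose proof (Rmin_l (Rmin d1 d2) (b - a)). pose proof (Rmin_r (Rmin d1 d2) (b - a)).
    pose proof (Rmin_l d1 d2). pose proof (Rmin_r d1 d2). lra. }
  specialize (H1 (a + m/2) (b - m/2) ltac:(lra) ltac:(lra) ltac:(lra)).
  specialize (H2 (a + m/2) (b - m/2) ltac:(lra) ltac:(lra) ltac:(lra)).
  set (I := integral (a + m/2) (b - m/2) f) in *.
  pose proof (Rabs_triang (I - L) (L' - I)) as T.
  replace (I - L + (L' - I)) with (L' - L) in T by ring.
  rewrite Rabs_minus_sym in H2. lra.
Qed.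

(* A function Phi on (0,1) is Gm-controlled when it is strictly increasing with
   increments at most K times those of Gm.  Such a function has finite limits at
   both ends, because Gm itself is bounded. *)
Section Controlled.

Variables (Phi : R -> R) (K : R).
Hypothesis HK : 0 < K.
Hypothesis Hctrl : forall a b, 0 < a < b -> b < 1 ->
  0 < Phi b - Phi a <= K * (Gm b - Gm a).

Lemma controlled_le a b : 0 < a <= b -> b < 1 -> Phi a <= Phi b.
Proof.
  intros Hab Hb. destruct (Req_dec a b) as [->|]; [lra|].
  pose proof (Hctrl a b ltac:(lra) Hb). lra.
Qed.

Lemma controlled_limit_right : exists U, forall y, 0 < y < 1 ->
  0 < U - Phi y <= K * (Gm 1 - Gm y).
Proof.
  assert (Hub : forall y x, 0 < y < 1 -> 0 < x < 1 -> Phi x <= Phi y + K * (Gm 1 - Gm y)).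
  { intros y x Hy Hx. pose proof (Gm_mono y 1 ltac:(lra) ltac:(lra)).
    destruct (Rle_dec x y).
    - pose proof (controlled_le x y ltac:(lra) ltac:(lra)). nra.
    - pose proof (Hctrl y x ltac:(lra) ltac:(lra)). pose proof (Gm_mono x 1 ltac:(lra) ltac:(lra)). nra. }
  set (E := fun r => exists x, 0 < x < 1 /\ r = Phi x).
  assert (EB : bound E).
  { exists (Phi (1/2) + K * (Gm 1 - Gm (1/2))). intros r [x [Hx ->]]. apply Hub; lra. }
  assert (Ene : exists r, E r) by (exists (Phi (1/2)), (1/2); split; [lra|reflexivity]).
  destruct (completeness E EB Ene) as [U [HU1 HU2]].
  exists U. intros y Hy. split.
  - pose proof (HU1 (Phi ((y + 1) / 2)) ltac:(exists ((y + 1) / 2); split; [lra|reflexivity])).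
    pose proof (Hctrl y ((y + 1) / 2) ltac:(lra) ltac:(lra)). lra.
  - enough (U <= Phi y + K * (Gm 1 - Gm y)) by lra.
    apply HU2. intros r [x [Hx ->]]. apply Hub; lra.
Qed.

End Controlled.

Lemma controlled_extension (Phi : R -> R) (K : R) : 0 < K ->
  (forall a b, 0 < a < b -> b < 1 -> 0 < Phi b - Phi a <= K * (Gm b - Gm a)) ->
  exists Z : R -> R, Z 1 = 0 /\
  (forall x y, 0 < x < 1 -> 0 < y < 1 -> Z x - Z y = Phi y - Phi x) /\
  (forall x y, 0 <= x < y -> y <= 1 -> 0 < Z x - Z y <= K * (Gm y - Gm x)).
Proof.
  intros HK Hctrl.
  destruct (controlled_limit_right Phi K HK Hctrl) as [U HU].
  (* the limit at 0 is the limit at 1 of the reflected function *)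
  assert (Hrefl : forall a b, 0 < a < b -> b < 1 ->
    0 < - Phi (1 - b) - - Phi (1 - a) <= K * (Gm b - Gm a)).
  { intros a b Ha Hb. pose proof (Hctrl (1 - b) (1 - a) ltac:(lra) ltac:(lra)).
    rewrite !Gm_reflect in H. lra. }
  destruct (controlled_limit_right (fun x => - Phi (1 - x)) K HK Hrefl) as [V HV].
  assert (HV0 : forall x, 0 < x < 1 -> 0 < V + Phi x <= K * (Gm x - Gm 0)).
  { intros x Hx. specialize (HV (1 - x) ltac:(lra)).
    rewrite Gm_reflect, Gm_1 in HV. rewrite Gm_0. replace (1 - (1 - x)) with x in HV by ring. lra. }
  exists (fun x => if Rle_dec 1 x then 0 else if Rle_dec x 0 then U + V else U - Phi x).
  split; [|split].
  - destruct (Rle_dec 1 1); lra.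
  - intros x y Hx Hy.
    destruct (Rle_dec 1 x), (Rle_dec 1 y), (Rle_dec x 0), (Rle_dec y 0); lra.
  - intros x y Hxy Hy.
    destruct (Rle_dec 1 x) as [|_]; [lra|].
    destruct (Rle_dec 1 y) as [Hy1|Hy1], (Rle_dec x 0) as [Hx0|Hx0].
    + replace y with 1 by lra. replace x with 0 by lra.
      pose proof (HU (1/2) ltac:(lra)). pose proof (HV0 (1/2) ltac:(lra)). lra.
    + replace y with 1 by lra. pose proof (HU x ltac:(lra)). lra.
    + destruct (Rle_dec y 0); [lra|]. replace x with 0 by lra.
      pose proof (HV0 y ltac:(lra)). lra.
    + destruct (Rle_dec y 0); [lra|]. pose proof (Hctrl x y ltac:(lra) ltac:(lra)). lra.
Qed.

Lemma controlled_holder (Z : R -> R) K : 0 < K ->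
  (forall x y, 0 <= x < y -> y <= 1 -> 0 < Z x - Z y <= K * (Gm y - Gm x)) ->
  forall x y, 0 <= x <= 1 -> 0 <= y <= 1 -> Rabs (Z x - Z y) <= 4 * K * sqrt (Rabs (x - y)).
Proof.
  intros HK Hctrl.
  assert (W : forall a b, 0 <= a <= b -> b <= 1 ->
            Rabs (Z a - Z b) <= 4 * K * sqrt (Rabs (a - b))).
  { intros a b Hab Hb1. destruct (Req_dec a b) as [->|Hne].
    - rewrite !Rminus_diag, !Rabs_R0, sqrt_0. lra.
    - pose proof (Hctrl a b ltac:(lra) Hb1).
      pose proof (Gm_holder b a ltac:(lra) ltac:(lra)) as HG.
      pose proof (Rle_abs (Gm b - Gm a)).
      rewrite (Rabs_minus_sym b a) in HG. rewrite Rabs_right by lra. nra. }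
  intros x y Hx Hy. destruct (Rle_dec x y).
  - apply W; lra.
  - rewrite Rabs_minus_sym, (Rabs_minus_sym x y). apply W; lra.
Qed.

Lemma controlled_improper_integral (phi Z : R -> R) K : 0 < K -> Z 1 = 0 ->
  (forall x y, 0 <= x < y -> y <= 1 -> 0 < Z x - Z y <= K * (Gm y - Gm x)) ->
  (forall a b, 0 < a <= b -> b < 1 -> integral a b phi = Z a - Z b) ->
  forall x, 0 <= x < 1 -> improper_integral x 1 phi = Z x.
Proof.
  intros HK Z1 Hctrl Hint x Hx. apply improper_integral_unique; [lra|].
  intros eps He.
  set (r := eps / (8 * K)).
  assert (Hr : 0 < r) by (apply Rdiv_lt_0_compat; lra).
  exists (r ^ 2). split; [nra|].
  intros a' b' Ha' Hb' Hab.
  assert (Hsmall : forall h, 0 <= h < r ^ 2 -> 4 * K * sqrt (Rabs h) < eps / 2).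
  { intros h Hh. rewrite Rabs_right by lra.
    assert (sqrt h < r) by (rewrite <- (sqrt_pow2 r) by lra; apply sqrt_lt_1_alt; lra).
    replace (eps / 2) with (4 * K * r) by (unfold r; field; lra).
    apply Rmult_lt_compat_l; lra. }
  pose proof (controlled_holder Z K HK Hctrl a' x ltac:(lra) ltac:(lra)) as H1.
  pose proof (controlled_holder Z K HK Hctrl 1 b' ltac:(lra) ltac:(lra)) as H2.
  pose proof (Hsmall (a' - x) ltac:(lra)). pose proof (Hsmall (1 - b') ltac:(lra)).
  rewrite Hint by lra.
  replace (Z a' - Z b' - Z x) with ((Z a' - Z x) + (Z 1 - Z b')) by (rewrite Z1; ring).
  eapply Rle_lt_trans; [apply Rabs_triang|]. lra.
Qed.

Section Dominated.

Variables (phi : R -> R) (K : R).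
Hypotheses (HK : 0 < K) (Hc : forall x, 0 < x < 1 -> continuous phi x)
  (Hp : forall x, 0 < x < 1 -> 0 < phi x) (Hb : forall x, 0 < x < 1 -> phi x <= K * Mj x).

Lemma dominated_ex_RInt a b : 0 < a < 1 -> 0 < b < 1 -> ex_RInt phi a b.
Proof.
  intros Ha Hb'. apply (@ex_RInt_continuous R_CompleteNormedModule).
  intros z Hz. apply Hc. split.
  - eapply Rlt_le_trans; [|apply Hz]. apply Rmin_glb_lt; lra.
  - eapply Rle_lt_trans; [apply Hz|]. apply Rmax_lub_lt; lra.
Qed.

Lemma dominated_antiderivative a b : 0 < a < 1 -> 0 < b < 1 ->
  RInt phi (1/2) b - RInt phi (1/2) a = RInt phi a b.
Proof.
  intros Ha Hb'.
  rewrite <- (RInt_Chasles (V:=R_CompleteNormedModule) phi (1/2) a b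
     (dominated_ex_RInt (1/2) a ltac:(lra) Ha) (dominated_ex_RInt a b Ha Hb')).
  change (RInt phi (1/2) a + RInt phi a b - RInt phi (1/2) a = RInt phi a b). ring.
Qed.

(* The antiderivative is Gm-controlled, by comparison with int Mj = Gm. *)
Lemma dominated_controlled a b : 0 < a < b -> b < 1 ->
  0 < RInt phi (1/2) b - RInt phi (1/2) a <= K * (Gm b - Gm a).
Proof.
  intros Hab Hb1. rewrite dominated_antiderivative, <- RInt_Mj by lra.
  assert (EM : ex_RInt Mj a b).
  { apply (@ex_RInt_continuous R_CompleteNormedModule). intros z Hz.
    rewrite Rmin_left, Rmax_right in Hz by lra. apply Mj_continuous; lra. }
  split.
  - apply RInt_gt_0; [lra| |]; intros x Hx; [apply Hp| apply Hc]; lra.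
  - replace (K * RInt Mj a b) with (RInt (fun x => K * Mj x) a b)
      by apply (RInt_scal (V:=R_CompleteNormedModule) Mj a b K EM).
    apply RInt_le; [lra| apply dominated_ex_RInt; lra| |].
    + apply (ex_RInt_scal (V:=R_NormedModule) Mj a b K EM).
    + intros x Hx. apply Hb; lra.
Qed.

Lemma dominated_improper_integral : exists Z : R -> R, Z 1 = 0 /\
    (forall x, 0 <= x < 1 -> improper_integral x 1 phi = Z x) /\
    (forall x y, 0 <= x < y -> y <= 1 -> Z y < Z x) /\
    (forall x y, 0 <= x <= 1 -> 0 <= y <= 1 ->
       Rabs (Z x - Z y) <= 4 * K * sqrt (Rabs (x - y))).
Proof.
  destruct (controlled_extension (fun x => RInt phi (1/2) x) K HK dominated_controlled)
    as (Z & Z1 & ZPhi & Zctrl).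
  exists Z. split; [|split; [|split]]; auto.
  - apply (controlled_improper_integral phi Z K HK Z1 Zctrl).
    intros a b Hab Hb1.
    rewrite integral_RInt, <- dominated_antiderivative, ZPhi by (try apply dominated_ex_RInt; lra).
    ring.
  - intros x y Hxy Hy1. pose proof (Zctrl x y Hxy Hy1). lra.
  - apply controlled_holder; auto.
Qed.

End Dominated.

Lemma holder_clamped_continuous (Z : R -> R) C : 0 < C ->
  (forall x y, 0 <= x <= 1 -> 0 <= y <= 1 -> Rabs (Z x - Z y) <= C * sqrt (Rabs (x - y))) ->
  clamped_continuous 1 Z.
Proof.
  intros HC Hh x. apply continuous_of_eps_delta. intros eps He.
  assert (Hr : 0 < eps / C) by (apply Rdiv_lt_0_compat; lra).
  exists ((eps / C) ^ 2). split; [nra|].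
  intros x' Hx'.
  pose proof (clamp_in 1 x ltac:(lra)). pose proof (clamp_in 1 x' ltac:(lra)).
  pose proof (clamp_lip 1 x x' ltac:(lra)).
  assert (sqrt (Rabs (clamp 1 x' - clamp 1 x)) < eps / C).
  { rewrite <- (sqrt_pow2 (eps / C)) by lra.
    apply sqrt_lt_1_alt. split; [apply Rabs_pos| lra]. }
  eapply Rle_lt_trans; [apply Hh; auto|].
  replace eps with (C * (eps / C)) by (field; lra). apply Rmult_lt_compat_l; auto.
Qed.

Lemma clamped_continuous_onto (Z : R -> R) : clamped_continuous 1 Z -> Z 1 = 0 ->
  forall y, 0 <= y <= Z 0 -> exists x, 0 <= x <= 1 /\ Z x = y.
Proof.
  intros Hc Z1 y Hy.
  destruct (Req_dec y (Z 0)) as [->|Ey]; [exists 0; split; [lra|auto]|].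
  destruct (Req_dec y 0) as [->|Ey0]; [exists 1; split; [lra|auto]|].
  set (g := fun x => y - Z (clamp 1 x)).
  assert (gc : continuity g).
  { intros x. apply continuity_pt_filterlim.
    apply (continuous_minus (fun _ => y) (fun x => Z (clamp 1 x))); [apply continuous_const| apply Hc]. }
  assert (g0 : g 0 < 0) by (unfold g; rewrite clamp_id by lra; lra).
  assert (g1 : 0 < g 1) by (unfold g; rewrite clamp_id by lra; lra).
  destruct (IVT g 0 1 gc ltac:(lra) g0 g1) as [x [Hx Hgx]].
  exists x; split; auto. unfold g in Hgx. rewrite clamp_id in Hgx by lra. lra.
Qed.

Lemma decreasing_inverse_continuous (Z : R -> R) :
  (forall x y, 0 <= x < y -> y <= 1 -> Z y < Z x) ->
  forall x0, 0 <= x0 <= 1 -> forall eps, 0 < eps -> exists delta, 0 < delta /\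
    forall x, 0 <= x <= 1 -> Rabs (Z x - Z x0) < delta -> Rabs (x - x0) < eps.
Proof.
  intros Hs x0 Hx0 eps He.
  assert (Zle : forall x y, 0 <= x <= y -> y <= 1 -> Z y <= Z x).
  { intros x y Hxy Hy. destruct (Req_dec x y) as [->|]; [lra|]. apply Rlt_le, Hs; lra. }
  (* the gaps in value at distance eps/2 on each side of x0 *)
  set (gl := if Rle_dec 0 (x0 - eps / 2) then Z (x0 - eps / 2) - Z x0 else 1).
  set (gr := if Rle_dec (x0 + eps / 2) 1 then Z x0 - Z (x0 + eps / 2) else 1).
  assert (Hgl : 0 < gl /\ forall x, 0 <= x -> x <= x0 - eps / 2 -> gl <= Z x - Z x0).
  { unfold gl. destruct (Rle_dec 0 (x0 - eps / 2)) as [Hle|Hlt%Rnot_le_lt]; [|split; intros; lra].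
    pose proof (Hs (x0 - eps/2) x0 ltac:(lra) ltac:(lra)).
    split; [lra|]. intros x Hx Hxl. pose proof (Zle x (x0 - eps/2) ltac:(lra) ltac:(lra)). lra. }
  assert (Hgr : 0 < gr /\ forall x, x0 + eps / 2 <= x -> x <= 1 -> gr <= Z x0 - Z x).
  { unfold gr. destruct (Rle_dec (x0 + eps / 2) 1) as [Hle|Hlt%Rnot_le_lt]; [|split; intros; lra].
    pose proof (Hs x0 (x0 + eps/2) ltac:(lra) ltac:(lra)).
    split; [lra|]. intros x Hx Hxl. pose proof (Zle (x0 + eps/2) x ltac:(lra) ltac:(lra)). lra. }
  destruct Hgl as [Hgl H1]. destruct Hgr as [Hgr H2].
  exists (Rmin gl gr). split; [apply Rmin_glb_lt; auto|].
  intros x Hx Hz.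
  pose proof (Rmin_l gl gr). pose proof (Rmin_r gl gr).
  apply Rabs_def2 in Hz. destruct Hz as [Hz1 Hz2].
  apply Rabs_def1.
  - destruct (Rle_dec (x0 + eps / 2) x); [|lra]. specialize (H2 x r ltac:(lra)). lra.
  - destruct (Rle_dec x (x0 - eps / 2)); [|lra]. specialize (H1 x ltac:(lra) r). lra.
Qed.

(* geom k u = 1 + u + ... + u^(k-1); the constant Q(t) and the defect of
   R(x;t) from zero are expressed through such geometric sums. *)
Fixpoint geom (k : nat) (u : R) : R :=
  match k with O => 0 | S k' => geom k' u + u ^ k' end.

Lemma geom_mul k u : geom k u * (1 - u) = 1 - u ^ k.
Proof. induction k; simpl; [ring|]. rewrite Rmult_plus_distr_r, IHk. ring. Qed.

Lemma geom_S_l k u : geom (S k) u = 1 + u * geom k u.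
Proof.
  induction k; [simpl; ring|].
  change (geom (S (S k)) u) with (geom (S k) u + u ^ (S k)).
  simpl in IHk |- *. rewrite Rmult_plus_distr_l. lra.
Qed.

Lemma geom_rev k u : 0 < u -> u ^ k * geom (S k) (/ u) = geom (S k) u.
Proof.
  intros Hu. induction k; [simpl; ring|].
  change (geom (S (S k)) (/ u)) with (geom (S k) (/ u) + (/ u) ^ (S k)).
  rewrite Rmult_plus_distr_l, <- Rpow_mult_distr, Rinv_r, pow1 by lra.
  change (u ^ S k) with (u * u ^ k). rewrite Rmult_assoc, IHk, (geom_S_l (S k) u). ring.
Qed.

Lemma geom_ge1 k u : 0 <= u -> 1 <= geom (S k) u.
Proof.
  intros Hu. induction k; [simpl; lra|].
  change (geom (S (S k)) u) with (geom (S k) u + u ^ (S k)).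
  pose proof (pow_le u (S k) Hu). lra.
Qed.

Lemma geom_mono k u w : 0 <= u <= w -> geom k u <= geom k w.
Proof. intros H. induction k; simpl; [lra|]. pose proof (pow_incr u w k H). lra. Qed.

Lemma geom_increment k u w : 0 <= u -> 0 <= w ->
  (u - w) ^ 2 <= (geom (S (S k)) u - geom (S (S k)) w) * (u - w).
Proof.
  intros Hu Hw. induction k; [simpl; nra|].
  change (geom (S (S (S k))) u) with (geom (S (S k)) u + u ^ (S (S k))).
  change (geom (S (S (S k))) w) with (geom (S (S k)) w + w ^ (S (S k))).
  assert (0 <= (u ^ S (S k) - w ^ S (S k)) * (u - w)).
  { destruct (Rle_dec u w).
    - pose proof (pow_incr u w (S (S k)) ltac:(lra)). nra.
    - pose proof (pow_incr w u (S (S k)) ltac:(lra)). nra. }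
  nra.
Qed.

Lemma geom_increment_signed k u w c : 0 <= u -> 0 <= w -> 0 < c * (u - w) ->
  c * (u - w) <= c * (geom (S (S k)) u - geom (S (S k)) w).
Proof.
  intros Hu Hw Hc.
  pose proof (geom_increment k u w Hu Hw) as G.
  assert (He : u - w <> 0) by (intro E; rewrite E in Hc; lra).
  assert (Hr : 0 < c / (u - w)).
  { replace (c / (u - w)) with (c * (u - w) / (u - w) ^ 2) by (field; auto).
    apply Rdiv_lt_0_compat; auto. apply pow2_gt_0; auto. }
  replace (c * (u - w)) with (c / (u - w) * (u - w) ^ 2) by (field; auto).
  replace (c * (geom (S (S k)) u - geom (S (S k)) w))
    with (c / (u - w) * ((geom (S (S k)) u - geom (S (S k)) w) * (u - w))) by (field; auto).
  apply Rmult_le_compat_l; lra.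
Qed.

Lemma Qf_geom p t : 0 < t -> t <> 1 -> Qf (S p) t = 1 - / geom (S p) (/ t).
Proof.
  intros Ht Ht1. unfold Qf. destruct (Req_EM_T t 1) as [|_]; [lra|].
  replace (S p - 1)%nat with p by lia.
  pose proof (geom_mul p t) as G1. pose proof (geom_mul (S p) t) as G2.
  pose proof (geom_rev p t Ht) as G3.
  pose proof (geom_ge1 p t ltac:(lra)) as G4. pose proof (pow_lt t p Ht).
  change (geom (S p) t) with (geom p t + t ^ p) in G2, G3, G4.
  assert (A : geom (S p) (/ t) = (geom p t + t ^ p) / t ^ p) by (rewrite <- G3; field; lra).
  rewrite <- G1, <- G2, A. field. repeat split; lra.
Qed.

(* With a = geom (p+1) (1/t), Q(t) = 1 - 1/a, and the denominator
   1 - Q + Q s^(p+1) of R(x;t) falls short of s^p by an explicit product. *)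
Lemma defect_identity p s t : 0 < s -> 0 < t ->
  let a := geom (S p) (/ t) in let A := geom (S p) (/ s) in
  s ^ p - (/ a + (1 - / a) * s ^ S p) = (s - 1) * geom (S p) s * (A - a) / (A * a).
Proof.
  intros Hs Ht a A.
  pose proof (geom_ge1 p (/ s) (Rlt_le _ _ (Rinv_0_lt_compat _ Hs))) as HA.
  pose proof (geom_ge1 p (/ t) (Rlt_le _ _ (Rinv_0_lt_compat _ Ht))) as Ha.
  fold a A in HA, Ha.
  pose proof (geom_mul (S p) s) as G1. pose proof (geom_rev p s Hs) as G2. fold A in G2.
  assert (Hsp : s ^ p = geom (S p) s / A) by (rewrite <- G2; field; lra).
  assert (HsSp : s ^ S p = 1 + (s - 1) * geom (S p) s) by lra.
  assert (E : s ^ p - (/ a + (1 - / a) * s ^ S p) =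
             (s - 1) * (/ a * geom (S p) s) - (s ^ S p - s ^ p)) by (rewrite HsSp; field; lra).
  replace (s ^ S p - s ^ p) with ((s - 1) * s ^ p) in E by (simpl; ring).
  rewrite E, Hsp. field. lra.
Qed.

Lemma defect_lower p t x : (1 <= p)%nat -> 0 < t -> t <> 1 -> 0 < x < 1 ->
  let s := 1 - (1 - t) * x in let a := geom (S p) (/ t) in
  (1 - t) ^ 2 * (x * (1 - x)) / (Rmax 1 t ^ 2 * geom (S p) (/ Rmin 1 t) ^ 2)
  <= s ^ p - (/ a + (1 - / a) * s ^ S p).
Proof.
  intros Hp Ht Ht1 Hx s a.
  set (m := Rmin 1 t). set (M := Rmax 1 t).
  assert (Hm : 0 < m /\ m <= 1 <= M /\ m <= t <= M)
    by (unfold m, M, Rmin, Rmax; destruct Rle_dec; lra).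
  assert (Hs : m <= s <= M) by (unfold s, m, M, Rmin, Rmax; destruct Rle_dec; nra).
  set (A := geom (S p) (/ s)). set (Tm := geom (S p) (/ m)).
  assert (Hinv : 0 < / s /\ 0 < / t /\ 0 < / m) by (repeat split; apply Rinv_0_lt_compat; lra).
  assert (HA : 1 <= A <= Tm).
  { split; [apply geom_ge1; lra| apply geom_mono; split; [lra| apply Rinv_le_contravar; lra]]. }
  assert (Ha : 1 <= a <= Tm).
  { split; [apply geom_ge1; lra| apply geom_mono; split; [lra| apply Rinv_le_contravar; lra]]. }
  assert (HTs : 1 <= geom (S p) s) by (apply geom_ge1; lra).
  set (q := (1 - t) ^ 2 * (x * (1 - x))).
  assert (Hq : 0 < q) by (unfold q; apply Rmult_lt_0_compat; [apply pow2_gt_0; lra| nra]).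
  assert (Hgap : (s - 1) * (/ s - / t) = q / (s * t)).
  { replace q with ((s - 1) * (t - s)) by (unfold q, s; ring). field. split; lra. }
  assert (Hst : 0 < s * t <= M ^ 2) by (simpl; split; nra).
  assert (Key : q / (s * t) <= (s - 1) * (A - a)).
  { rewrite <- Hgap. destruct p as [|k]; [lia|].
    apply geom_increment_signed; try lra. rewrite Hgap. apply Rdiv_lt_0_compat; lra. }
  pose proof (defect_identity p s t ltac:(lra) Ht) as DI. cbv zeta in DI. fold a A in DI.
  rewrite DI.
  apply Rle_trans with (q / (s * t) / (A * a)).
  - unfold Rdiv. rewrite Rmult_assoc, <- Rinv_mult. apply Rmult_le_compat_l; [lra|].
    apply Rinv_le_contravar; [apply Rmult_lt_0_compat; nra|].
    apply Rmult_le_compat; try nra.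
  - assert (0 < q / (s * t)) by (apply Rdiv_lt_0_compat; lra).
    replace ((s - 1) * geom (S p) s * (A - a)) with (geom (S p) s * ((s - 1) * (A - a))) by ring.
    unfold Rdiv at 2 3. apply Rmult_le_compat_r; [apply Rlt_le, Rinv_0_lt_compat; nra|]. nra.
Qed.

Lemma Rfun_denominator p t x : 0 < t -> t <> 1 -> 0 <= x <= 1 ->
  let a := geom (S p) (/ t) in let s := 1 - (1 - t) * x in
  1 - Qf (S p) t + Qf (S p) t * s ^ S p = / a + (1 - / a) * s ^ S p /\
  0 < / a /\ / a <= / a + (1 - / a) * s ^ S p <= 1 + Rmax 1 t ^ S p.
Proof.
  intros Ht Ht1 Hx a s. rewrite Qf_geom by auto. fold a. split; [ring|].
  assert (Ha : 1 <= a) by (apply geom_ge1, Rlt_le, Rinv_0_lt_compat; lra).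
  assert (Hia : 0 < / a <= 1).
  { split; [apply Rinv_0_lt_compat; lra|]. rewrite <- Rinv_1. apply Rinv_le_contravar; lra. }
  assert (Hs : 0 <= s <= Rmax 1 t) by (unfold s, Rmax; destruct Rle_dec; nra).
  pose proof (pow_le s (S p) ltac:(lra)). pose proof (pow_incr s (Rmax 1 t) (S p) Hs).
  nra.
Qed.

(* The constant in the lower bound R(x;t)^2 >= c (x (1-x)) for t <> 1. *)
Definition Rfun_const (p : nat) (t : R) : R :=
  / (Rmax 1 t ^ 2 * geom (S p) (/ Rmin 1 t) ^ 2 * (1 + Rmax 1 t ^ S p)).

Lemma Rfun_const_pos p t : 0 < t -> 0 < Rfun_const p t.
Proof.
  intros Ht. unfold Rfun_const.
  assert (1 <= Rmax 1 t) by (unfold Rmax; destruct Rle_dec; lra).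
  assert (1 <= geom (S p) (/ Rmin 1 t))
    by (apply geom_ge1, Rlt_le, Rinv_0_lt_compat; unfold Rmin; destruct Rle_dec; lra).
  pose proof (pow_le (Rmax 1 t) (S p) ltac:(lra)).
  apply Rinv_0_lt_compat. repeat apply Rmult_lt_0_compat; try apply pow_lt; lra.
Qed.

Lemma Rfun_radicand_lower p t x : (1 <= p)%nat -> 0 < t -> t <> 1 -> 0 < x < 1 ->
  let s := 1 - (1 - t) * x in let a := geom (S p) (/ t) in
  Rfun_const p t * ((1 - t) ^ 2 * (x * (1 - x)))
  <= (s ^ p / (/ a + (1 - / a) * s ^ S p)) ^ 2 - 1.
Proof.
  intros Hp Ht Ht1 Hx s a.
  destruct (Rfun_denominator p t x Ht Ht1 ltac:(lra)) as [_ HD]. fold a s in HD.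
  pose proof (defect_lower p t x Hp Ht Ht1 Hx) as NB. cbv zeta in NB. fold a s in NB.
  set (D := / a + (1 - / a) * s ^ S p) in *.
  set (M := Rmax 1 t) in *. set (Tm := geom (S p) (/ Rmin 1 t)) in *.
  set (q := (1 - t) ^ 2 * (x * (1 - x))) in *.
  assert (Hq : 0 < q) by (unfold q; apply Rmult_lt_0_compat; [apply pow2_gt_0; lra| nra]).
  assert (HM : 1 <= M) by (unfold M, Rmax; destruct Rle_dec; lra).
  assert (HTm : 1 <= Tm)
    by (apply geom_ge1, Rlt_le, Rinv_0_lt_compat; unfold Rmin; destruct Rle_dec; lra).
  pose proof (pow_le M (S p) ltac:(lra)).
  assert (Hr : 0 < q / (M ^ 2 * Tm ^ 2))
    by (apply Rdiv_lt_0_compat; [|apply Rmult_lt_0_compat; apply pow_lt]; lra).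
  assert (Hf : Rfun_const p t * q <= s ^ p / D - 1).
  { replace (s ^ p / D - 1) with ((s ^ p - D) / D) by (field; lra).
    replace (Rfun_const p t * q) with (q / (M ^ 2 * Tm ^ 2) / (1 + M ^ S p))
      by (unfold Rfun_const; fold M Tm; field; repeat split; try apply pow_nonzero; lra).
    apply Rle_trans with ((s ^ p - D) / (1 + M ^ S p)); unfold Rdiv.
    - apply Rmult_le_compat_r; [apply Rlt_le, Rinv_0_lt_compat|]; lra.
    - apply Rmult_le_compat_l; [lra| apply Rinv_le_contravar; lra]. }
  pose proof (Rfun_const_pos p t Ht). nra.
Qed.

Lemma Rfun_lower_bound_ne1 p t x : (1 <= p)%nat -> 0 < t -> t <> 1 -> 0 < x < 1 ->
  sqrt (Rfun_const p t) * sqrt (x * (1 - x)) <= Rfun (S p) x t.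
Proof.
  intros Hp Ht Ht1 Hx.
  destruct (Rfun_denominator p t x Ht Ht1 ltac:(lra)) as [ED _].
  pose proof (Rfun_radicand_lower p t x Hp Ht Ht1 Hx) as HR. cbv zeta in HR.
  pose proof (Rfun_const_pos p t Ht).
  assert (Ha1 : 0 < Rabs (1 - t)) by (apply Rabs_pos_lt; lra).
  unfold Rfun. destruct (Req_EM_T t 1) as [|_]; [lra|].
  replace (S p - 1)%nat with p by lia. rewrite ED.
  apply Rle_trans with (/ Rabs (1 - t) * sqrt (Rfun_const p t * ((1 - t) ^ 2 * (x * (1 - x))))).
    rewrite <- Rsqr_pow2.
    rewrite (sqrt_mult (Rfun_const p t)), (sqrt_mult (Rsqr (1 - t))), sqrt_Rsqr_abs
      by (try apply Rle_0_sqr; try apply Rmult_le_pos; try apply Rle_0_sqr; nra).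
    right. field. lra.
  - apply Rmult_le_compat_l; [apply Rlt_le, Rinv_0_lt_compat; lra|].
    apply sqrt_le_1_alt; auto.
Qed.

Lemma Rfun_lower_bound n t : (2 <= n)%nat -> 0 < t ->
  exists c, 0 < c /\ forall x, 0 < x < 1 -> c * sqrt (x * (1 - x)) <= Rfun n x t.
Proof.
  intros Hn Ht. destruct (Req_EM_T t 1) as [->|Ht1].
  - exists 1. split; [lra|]. intros x Hx. unfold Rfun. destruct (Req_EM_T 1 1) as [_|]; [|lra].
    rewrite Rmult_1_l. apply sqrt_le_1_alt.
    assert (2 <= INR n) by (replace 2 with (INR 2) by (simpl; lra); apply le_INR; auto).
    assert (0 < x * (1 - x)) by nra. nra.
  - destruct n as [|p]; [lia|]. exists (sqrt (Rfun_const p t)). split.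
    + apply sqrt_lt_R0, Rfun_const_pos; auto.
    + intros x Hx. apply Rfun_lower_bound_ne1; auto; lia.
Qed.

Lemma Rfun_continuous n t x : (2 <= n)%nat -> 0 < t -> 0 < x < 1 ->
  continuous (fun y => Rfun n y t) x.
Proof.
  intros Hn Ht Hx. unfold Rfun. destruct (Req_EM_T t 1) as [->|Ht1].
  - apply continuous_sqrt_comp, (ex_derive_continuous (K:=R_AbsRing) (V:=R_NormedModule)).
    auto_derive. auto.
  - destruct n as [|p]; [lia|].
    destruct (Rfun_denominator p t x Ht Ht1 ltac:(lra)) as [ED HD].
    apply (continuous_mult (fun _ => / Rabs (1 - t))); [apply continuous_const|].
    apply continuous_sqrt_comp, (ex_derive_continuous (K:=R_AbsRing) (V:=R_NormedModule)).
    auto_derive. replace (1 + - ((1 - t) * x)) with (1 - (1 - t) * x) by ring.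
    change ((1 - (1 - t) * x) * (1 - (1 - t) * x) ^ p) with ((1 - (1 - t) * x) ^ S p). lra.
Qed.

(* 1/R(.;t) is dominated by a multiple of Mj, so zeta(.;t) is a finite,
   strictly decreasing, 1/2-Hoelder function on [0,1] vanishing at 1. *)
Lemma zeta_properties n t : (2 <= n)%nat -> 0 < t -> exists C, 0 < C /\
  zeta n 1 t = 0 /\
  (forall x y, 0 <= x < y -> y <= 1 -> zeta n y t < zeta n x t) /\
  (forall x y, 0 <= x <= 1 -> 0 <= y <= 1 ->
     Rabs (zeta n x t - zeta n y t) <= C * sqrt (Rabs (x - y))).
Proof.
  intros Hn Ht.
  destruct (Rfun_lower_bound n t Hn Ht) as [c [Hc HR]].
  assert (Rpos : forall x, 0 < x < 1 -> 0 < Rfun n x t).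
  { intros x Hx. pose proof (HR x Hx). assert (0 < sqrt (x * (1 - x))) by (apply sqrt_lt_R0; nra). nra. }
  assert (Hdom : forall x, 0 < x < 1 -> / Rfun n x t <= 2 / c * Mj x).
  { intros x Hx. specialize (HR x Hx). unfold Mj.
    set (a := sqrt x) in *. set (b := sqrt (1 - x)) in *.
    assert (Ha : 0 < a) by (apply sqrt_lt_R0; lra).
    assert (Hb : 0 < b) by (apply sqrt_lt_R0; lra).
    assert (a * a = x /\ b * b = 1 - x) as [Haa Hbb] by (split; apply sqrt_sqrt; lra).
    rewrite sqrt_mult in HR by lra. fold a b in HR.
    assert (Hab : 0 < c * (a * b)) by (apply Rmult_lt_0_compat; nra).
    apply Rle_trans with (/ (c * (a * b))); [apply Rinv_le_contravar; auto|].
    replace (2 / c * (/ a + / b)) with (/ (c * (a * b)) + (2 * (a + b) - 1) / (c * (a * b)))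
      by (field; lra).
    assert (0 <= (2 * (a + b) - 1) / (c * (a * b))) by (apply Rdiv_le_0_compat; nra).
    lra. }
  destruct (dominated_improper_integral (fun y => / Rfun n y t) (2 / c)
              ltac:(apply Rdiv_lt_0_compat; lra))
    as (Z & Z1 & Himp & Hdec & Hhol).
  - intros x Hx. apply continuous_Rinv_comp; [apply Rfun_continuous; auto|].
    pose proof (Rpos x Hx). lra.
  - intros x Hx. apply Rinv_0_lt_compat, Rpos; auto.
  - exact Hdom.
  - assert (zZ : forall x, 0 <= x <= 1 -> zeta n x t = Z x).
    { intros x Hx. unfold zeta. destruct (Req_EM_T x 1) as [->|Hx1]; auto. apply Himp. lra. }
    exists (4 * (2 / c)). split; [apply Rmult_lt_0_compat; [lra| apply Rdiv_lt_0_compat; lra]|].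
    split; [|split].
    + rewrite zZ; auto; lra.
    + intros x y Hxy Hy. rewrite !zZ by lra. auto.
    + intros x y Hx Hy. rewrite !zZ by lra. auto.
Qed.

Section Profile.

Variables (n : nat) (d t : R).
Hypotheses (Hn : (2 <= n)%nat) (Hd : 0 < d) (Ht : 0 < t).

(* P(t) = zeta(0;t) > zeta(1;t) = 0. *)
Lemma Pf_pos : 0 < Pf n t.
Proof.
  destruct (zeta_properties n t Hn Ht) as (C & HC & Z1 & Hdec & _).
  unfold Pf. rewrite <- Z1. apply Hdec; lra.
Qed.

Lemma zeta_inv_spec y : 0 <= y <= Pf n t ->
  0 <= zeta_inv n y t <= 1 /\ zeta n (zeta_inv n y t) t = y.
Proof.
  intros Hy.
  destruct (zeta_properties n t Hn Ht) as (C & HC & Z1 & Hdec & Hhol).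
  pose proof (holder_clamped_continuous _ C HC Hhol) as Hc.
  destruct (clamped_continuous_onto _ Hc Z1 y Hy) as [x Hx].
  exact (epsilon_spec (inhabits 0) (fun x => 0 <= x <= 1 /\ zeta n x t = y) (ex_intro _ x Hx)).
Qed.

Definition profile (z : R) : R := zeta_inv n (Pf n t * z / d) t.

Lemma profile_spec z : 0 <= z <= d ->
  0 <= profile z <= 1 /\ zeta n (profile z) t = Pf n t * z / d.
Proof.
  intros Hz. apply zeta_inv_spec. pose proof Pf_pos. split.
  - apply Rmult_le_pos; [nra| apply Rlt_le, Rinv_0_lt_compat; lra].
  - apply Rmult_le_reg_r with d; auto. unfold Rdiv. rewrite Rmult_assoc, Rinv_l by lra. nra.
Qed.

Lemma profile_continuous : continuous_within 0 d profile.
Proof.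
  destruct (zeta_properties n t Hn Ht) as (C & HC & _ & Hdec & _).
  pose proof Pf_pos as HP. set (P := Pf n t) in *.
  intros z0 Hz0 eps He. destruct (profile_spec z0 Hz0) as [Hx0 HZ0].
  destruct (decreasing_inverse_continuous _ Hdec (profile z0) Hx0 eps He) as [dl [Hdl Hf]].
  exists (dl * d / P). split; [apply Rdiv_lt_0_compat; nra|].
  intros z Hz Hzz. destruct (profile_spec z Hz) as [Hx HZ]. apply Hf; auto.
  rewrite HZ, HZ0. fold P.
  replace (P * z / d - P * z0 / d) with (P / d * (z - z0)) by (field; lra).
  rewrite Rabs_mult, (Rabs_right (P / d)) by (apply Rle_ge, Rlt_le, Rdiv_lt_0_compat; lra).
  replace dl with (P / d * (dl * d / P)) by (field; lra).
  apply Rmult_lt_compat_l; auto. apply Rdiv_lt_0_compat; lra.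
Qed.

Definition weight (z : R) : R := vf n d z t ^ (n - 1).

Lemma weight_continuous : clamped_continuous d weight.
Proof.
  pose proof (clamped_continuous_of_within d profile ltac:(lra) profile_continuous) as HX.
  intros x. unfold weight, vf. fold (profile (clamp d x)).
  apply (continuous_comp (fun z => d / Pf n t * (1 - (1 - t) * profile (clamp d z))) (fun v => v ^ (n - 1))).
  - apply (continuous_mult (fun _ => d / Pf n t)); [apply continuous_const|].
    apply (continuous_minus (fun _ => 1)); [apply continuous_const|].
    apply (continuous_mult (fun _ => 1 - t)); [apply continuous_const| apply HX].
  - apply (ex_derive_continuous (K:=R_AbsRing) (V:=R_NormedModule) (fun v : R => v ^ (n - 1))).
    auto_derive. auto.
Qed.

Lemma weight_integral_pos : 0 < integral 0 d weight.
Proof.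
  pose proof Pf_pos.
  assert (Hpos : forall z, 0 <= z <= d -> 0 < weight z).
  { intros z Hz. unfold weight, vf. fold (profile z). apply pow_lt.
    destruct (profile_spec z Hz) as [Hx _].
    apply Rmult_lt_0_compat; [apply Rdiv_lt_0_compat; lra|].
    destruct (Rle_dec t 1); nra. }
  rewrite integral_RInt by (apply ex_RInt_clamped, weight_continuous; auto).
  rewrite (RInt_ext weight (fun z => weight (clamp d z))).
  - apply RInt_gt_0; auto.
    + intros x Hx. apply Hpos, clamp_in; lra.
    + intros x Hx. apply weight_continuous.
  - intros x Hx. rewrite Rmin_left, Rmax_right in Hx by lra. rewrite clamp_id; auto; lra.
Qed.

End Profile.

Section Projection.

Variables (n : nat) (d : R).
Hypotheses (Hn : (2 <= n)%nat) (Hd : 0 < d).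

Definition wmean (s : R) (u : R -> R) : R :=
  integral 0 d (fun y => u y * weight n d s y) / integral 0 d (weight n d s).

Lemma Wproj_wmean s u : Wproj n d s u = fun z => u z - wmean s u.
Proof. reflexivity. Qed.

Lemma wmean_affine s (g F : R -> R) a b : 0 < s -> clamped_continuous d g ->
  (forall z, 0 <= z <= d -> F z = a * g z + b) -> wmean s F = a * wmean s g + b.
Proof.
  intros Hs Hg HF. pose proof (weight_integral_pos n d s Hn Hd Hs).
  unfold wmean. rewrite (integral_affine d (weight n d s) g F a b Hd) by
    (auto; apply weight_continuous; auto).
  field. lra.
Qed.

Lemma Wproj_affine s (g F : R -> R) a b : 0 < s -> clamped_continuous d g ->
  (forall z, 0 <= z <= d -> F z = a * g z + b) ->
  forall z, 0 <= z <= d -> Wproj n d s F z = a * Wproj n d s g z.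
Proof.
  intros Hs Hg HF z Hz. rewrite !Wproj_wmean, (wmean_affine s g F a b), HF by auto. ring.
Qed.

Lemma Wproj_shift s u c : 0 < s -> clamped_continuous d u ->
  Wproj n d s (fun z => u z - c) = Wproj n d s u.
Proof.
  intros Hs Hu. rewrite !Wproj_wmean, (wmean_affine s u _ 1 (- c)) by (auto; intros; ring).
  apply functional_extensionality; intro z. ring.
Qed.

Lemma Wproj_Xt s w : Xt n d s w -> Wproj n d s w = w.
Proof.
  intros (_ & Hw & _). apply functional_extensionality; intro z.
  unfold Wproj. rewrite Hw. unfold Rdiv. ring.
Qed.

Lemma Wproj_into_Xt s u : 0 < s -> C2_on 0 d u ->
  deriv_within 0 d u 0 = 0 -> deriv_within 0 d u d = 0 -> Xt n d s (Wproj n d s u).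
Proof.
  intros Hs Hu H0 Hd'. pose proof (weight_integral_pos n d s Hn Hd Hs).
  rewrite Wproj_wmean. split; [apply C2_shift; auto|]. rewrite deriv_within_shift.
  split; auto. change (vf n d ?y s ^ (n - 1)) with (weight n d s y).
  rewrite (integral_affine d (weight n d s) u _ 1 (- wmean s u) Hd);
    [| apply weight_continuous; auto| apply C2_clamped_continuous; auto; lra| intros; ring].
  unfold wmean. field. lra.
Qed.

(* A nonzero element of X_r has a projection W(s) that is nonzero on [0,d]:
   otherwise it would be a constant with zero r-weighted mean. *)
Lemma Wproj_nonzero r s u : 0 < r -> Xt n d r u ->
  (exists z, 0 <= z <= d /\ u z <> 0) -> exists z, 0 <= z <= d /\ Wproj n d s u z <> 0.
Proof.
  intros Hr (HuC2 & HuI & _) [z0 [Hz0 Hu0]]. apply NNPP; intros Hno.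
  assert (Hconst : forall z, 0 <= z <= d -> u z = 0 * u z + wmean s u).
  { intros z Hz. apply NNPP; intro Hc. apply Hno. exists z. rewrite Wproj_wmean. split; auto. lra. }
  change (vf n d ?y r ^ (n - 1)) with (weight n d r y) in HuI.
  rewrite (integral_affine d (weight n d r) u u 0 (wmean s u) Hd) in HuI;
    [| apply weight_continuous; auto| apply C2_clamped_continuous; auto; lra| auto].
  pose proof (weight_integral_pos n d r Hn Hd Hr). specialize (Hconst z0 Hz0).
  assert (wmean s u = 0) by nra. lra.
Qed.

Lemma eigenvalue_transfer_right r s (L : (R -> R) -> R -> R) lam : 0 < r -> 0 < s ->
  is_eigenvalue_on n d r (fun u => Wproj n d r (L (Wproj n d s u))) lam ->
  is_eigenvalue_on n d s (fun w => Wproj n d s (L w)) lam.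
Proof.
  intros Hr Hs [u [Hu [Hnz Heig]]].
  pose proof Hu as (HuC2 & _ & Hu0 & Hud).
  exists (Wproj n d s u). split; [apply Wproj_into_Xt; auto|]. split.
  - exact (Wproj_nonzero r s u Hr Hu Hnz).
  - apply (Wproj_affine s u _ lam (wmean r (L (Wproj n d s u))) Hs).
    + apply C2_clamped_continuous; auto; lra.
    + intros z Hz. specialize (Heig z Hz). rewrite Wproj_wmean in Heig. lra.
Qed.

(* Conversely W(r) maps eigenvectors of W(s) L on X_s to eigenvectors of
   W(r) L W(s) on X_r, since W(s) W(r) = W(s) is the identity on X_s. *)
Lemma eigenvalue_transfer_left r s (L : (R -> R) -> R -> R) lam : 0 < r -> 0 < s ->
  is_eigenvalue_on n d s (fun w => Wproj n d s (L w)) lam ->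
  is_eigenvalue_on n d r (fun u => Wproj n d r (L (Wproj n d s u))) lam.
Proof.
  intros Hr Hs [w [Hw [Hnz Heig]]].
  pose proof Hw as (HwC2 & _ & Hw0 & Hwd).
  assert (Hwc : clamped_continuous d w) by (apply C2_clamped_continuous; auto; lra).
  assert (Hback : Wproj n d s (Wproj n d r w) = w).
  { rewrite (Wproj_wmean r w), Wproj_shift; auto. apply Wproj_Xt; auto. }
  exists (Wproj n d r w). split; [apply Wproj_into_Xt; auto|]. split.
  - exact (Wproj_nonzero s r w Hs Hw Hnz).
  - rewrite Hback. apply (Wproj_affine r w _ lam (wmean s (L w)) Hr Hwc).
    intros z Hz. specialize (Heig z Hz). rewrite Wproj_wmean in Heig. lra.
Qed.

End Projection.

Theorem lemma5p1 (n : nat) (d t lam : R) :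
  (2 <= n)%nat -> 0 < d -> 0 < t ->
  (is_eigenvalue_on n d 1 (Bop n d t) lam <->
   is_eigenvalue_on n d t (Atilde n d t) lam).
Proof.
  intros Hn Hd Ht. split.
  - apply (eigenvalue_transfer_right n d Hn Hd 1 t); lra.
  - apply (eigenvalue_transfer_left n d Hn Hd 1 t); lra.
Qed.
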